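(* Let $e\ge1$ and let $A$ be the binomial nilpotent $\mathbb{F}_p$-algebra in $e$ variables, i.e. the ideal generated by $x_1,\dots,x_e$ in $\mathbb{F}_p[x_1,\dots,x_e]/(x_1^2,\dots,x_e^2)$; it has dimension $2^e-1$, with basis the nonempty squarefree monomials, and satisfies $A^e\ne0$, $A^{e+1}=0$. Then for every $t$ with $1\le t\le e$ and every $u\in N_t\setminus N_{t-1}$, \[ \dim_{\mathbb{F}_p}(\mathbb{F}_pu+Au)\ge 2^{t-1}. \]
   Context: $N_k=\{a\in A: y_1\cdots y_k a=0\ \forall y_1,\dots,y_k\in A\}$, $N_0=0$. *)

From HB Require Import structures.
From mathcomp Require Import all_boot all_order all_algebra.
Set Implicit Arguments. Unset Strict Implicit. Unset Printing Implicit Defensive.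
Import GRing.Theory.
Local Open Scope ring_scope.

(* Ambient algebra F_p[x_1..x_e]/(x_1^2,...,x_e^2): an element is a finite
   function from squarefree monomials (subsets S of 'I_e, S <-> prod_{i in S} x_i)
   to F_p, i.e. its coefficient vector.  The codomain is 'F_p^o so that the
   type is canonically an 'F_p-vector space (vectType). *)
Definition bpoly (p e : nat) := {ffun {set 'I_e} -> ('F_p)^o}.

(* Product: x_T * x_U = x_(T u U) if T, U disjoint, and 0 otherwise. *)
Definition bmul (p e : nat) (f g : bpoly p e) : bpoly p e :=
  [ffun S : {set 'I_e} => \sum_(T : {set 'I_e} | T \subset S) f T * g (S :\: T)].

(* The binomial nilpotent algebra A = (x_1,...,x_e): elements with zero
   constant coefficient. *)
Definition inA (p e : nat) (f : bpoly p e) : bool := f set0 == 0.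

Definition inN (p e : nat) (k : nat) (a : bpoly p e) : Prop :=
  inA a /\ forall ys : seq (bpoly p e), size ys = k -> all (@inA p e) ys ->
    foldr (@bmul p e) a ys = 0.

(* A u = { a u | a in A } (a subspace; we take its span to view it as one). *)
Definition Aspan (p e : nat) (u : bpoly p e) : {vspace bpoly p e} :=
  <<[seq bmul a u | a <- enum (@inA p e)]>>%VS.

From HB Require Import structures.
From mathcomp Require Import all_boot all_order all_algebra zify.
Set Implicit Arguments. Unset Strict Implicit. Unset Printing Implicit Defensive.
Import GRing.Theory.
Local Open Scope ring_scope.

(* If [u] is not in [N_(t-1)], multiplying by [t-1] elements of [A], each of
   which raises the lowest degree of a coefficient by one, does not kill [u];
   hence [u] has a nonzero coefficient at some monomial [x_S0] with
   [|S0| + t - 1 <= e].  For the complement [C] of [S0] the [2^|C|] products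
   [x_T u], [T \subset C], are linearly independent: the coefficient of [x_T u]
   at [S0 :|: T] is [u S0 != 0], and that of [x_T' u] vanishes unless
   [T' \subset T].  They all lie in [F_p u + A u], and [|C| >= t - 1]. *)

Section BinomialAlgebra.
Variables p e : nat.
Local Notation B := (bpoly p e).

Definition monomial (T : {set 'I_e}) : B := [ffun S => ((S == T)%:R : 'F_p)].

Lemma bmul_monomialE T (u : B) S :
  bmul (monomial T) u S = if T \subset S then u (S :\: T) else 0.
Proof.
rewrite /bmul ffunE big_mkcond (bigD1 T) //= big1 ?addr0.
  by rewrite ffunE eqxx mul1r; case: ifP.
by move=> T' /negPf nT; rewrite ffunE nT mul0r; case: ifP.
Qed.

Lemma bmul_monomial0 (u : B) : bmul (monomial set0) u = u.
Proof. by apply/ffunP=> S; rewrite bmul_monomialE sub0set setD0. Qed.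

Lemma inA_monomial T : T != set0 -> inA (monomial T).
Proof. by move=> nT; rewrite /inA ffunE (eq_sym set0) (negPf nT). Qed.

Definition vanish_below (m : nat) (u : B) :=
  forall S : {set 'I_e}, (#|S| < m)%N -> u S = 0.

Lemma bmul_vanish_below (y u : B) m :
  inA y -> vanish_below m u -> vanish_below m.+1 (bmul y u).
Proof.
move=> /eqP y0 hu S hS; rewrite /bmul ffunE big1 // => T TS.
have [->|nT] := eqVneq T set0; first by rewrite y0 mul0r.
rewrite ltnS in hS; rewrite hu ?mulr0 //; apply: leq_trans hS.
by rewrite -(cardsID T S) (setIidPr TS) -[ltnLHS]add0n ltn_add2r card_gt0.
Qed.

Lemma foldr_bmul_vanish_below (u : B) m ys : all (@inA p e) ys ->
  vanish_below m u -> vanish_below (m + size ys) (foldr (@bmul p e) u ys).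
Proof.
elim: ys => [|y ys IH] /= => [_|/andP[hy hys] hu]; first by rewrite addn0.
by rewrite addnS; apply: (bmul_vanish_below hy (IH hys hu)).
Qed.

Lemma notinN_coef k (u : B) : inA u -> ~ inN k u ->
  exists2 S0 : {set 'I_e}, u S0 != 0 & (#|S0| + k <= e)%N.
Proof.
move=> uA unN; case: (pickP [pred S | (u S != 0) && (#|S| + k <= e)%N]).
  by move=> S /andP[]; exists S.
move=> noS0; exfalso; apply: unN; split=> // ys sz_ys ys_A.
apply/ffunP => S; rewrite ffunE.
have u_low : vanish_below (e.+1 - k) u.
  move=> S' lt; have small : (#|S'| + k <= e)%N by lia.
  by move: (noS0 S') => /=; rewrite small andbT => /negbFE/eqP.
apply: (foldr_bmul_vanish_below ys_A u_low).
have : (#|S| <= e)%N by rewrite -[leqRHS](card_ord e) max_card.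
by rewrite sz_ys; lia.
Qed.

Section TriangularFamily.
Variables (u : B) (S0 : {set 'I_e}).
Hypothesis uS0 : u S0 != 0.

Lemma coef_bmul_monomial_diag (T : {set 'I_e}) :
  T \subset ~: S0 -> bmul (monomial T) u (S0 :|: T) = u S0.
Proof.
move=> TC; rewrite bmul_monomialE subsetUr setDUl setDv setU0.
suff /setDidPl -> : [disjoint S0 & T] by [].
by rewrite disjoint_sym disjoints_subset.
Qed.

Lemma coef_bmul_monomial_offdiag (T T' : {set 'I_e}) :
  T' \subset ~: S0 -> ~~ (T' \subset T) -> bmul (monomial T') u (S0 :|: T) = 0.
Proof.
move=> T'C nT'T; rewrite bmul_monomialE -subDset.
have /setDidPl -> : [disjoint T' & S0] by rewrite disjoints_subset.
by rewrite (negPf nT'T).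
Qed.

Lemma free_monomial_multiples :
  free [seq bmul (monomial T) u | T <- enum (powerset (~: S0))].
Proof.
set Ts := enum _; set X := [seq _ | T <- Ts].
have TsC T : T \in Ts -> T \subset ~: S0 by rewrite mem_enum powersetE.
have szX : size X = size Ts by rewrite size_map.
rewrite [free X]/(free (in_tuple X)); apply/freeP => k hk.
suff k0 n (i : 'I_(size X)) : (#|nth set0 Ts i| < n)%N -> k i = 0 by move=> i; apply: k0.
elim: n i => [//|n IH] i; rewrite ltnS => hi.
have iTs : (i < size Ts)%N by rewrite -szX.
have := congr1 (fun f : B => f (S0 :|: nth set0 Ts i)) hk.
rewrite sum_ffunE ffunE (bigD1 i) //= big1 => [|j nji]; last first.
  have jTs : (j < size Ts)%N by rewrite -szX.
  rewrite ffunE (nth_map set0) //.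
  have [TjTi|nTjTi] := boolP (nth set0 Ts j \subset nth set0 Ts i); last first.
    by rewrite coef_bmul_monomial_offdiag ?scaler0 ?TsC ?mem_nth.
  rewrite (IH j) ?scale0r //; apply: (leq_trans _ hi); apply: proper_card.
  rewrite properEneq TjTi andbT; apply: contra nji => /eqP Tij.
  by rewrite -val_eqE /= -(nth_uniq set0 jTs iTs (enum_uniq _)) Tij.
rewrite addr0 ffunE (nth_map set0) // coef_bmul_monomial_diag ?TsC ?mem_nth //.
by move/eqP; rewrite scaler_eq0 (negPf uS0) orbF => /eqP.
Qed.

End TriangularFamily.

Lemma span_monomial_multiples_sub (u : B) (Ts : seq {set 'I_e}) :
  (<<[seq bmul (monomial T) u | T <- Ts]>> <= <[u]> + Aspan u)%VS.
Proof.
apply/span_subvP => _ /mapP[T _ ->].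
have [->|nT] := eqVneq T set0.
  by rewrite bmul_monomial0; apply/(subvP (addvSl _ _))/memv_line.
apply/(subvP (addvSr _ _))/memv_span/map_f.
by rewrite mem_enum; apply: inA_monomial.
Qed.

End BinomialAlgebra.

Theorem proposition4p3 (p e : nat) (hp : prime p) (he : (1 <= e)%N)
  (t : nat) (ht1 : (1 <= t)%N) (hte : (t <= e)%N) (u : bpoly p e)
  (hu : inN t u) (hnu : ~ inN t.-1 u) :
  (2 ^ t.-1 <= \dim (<[u]> + Aspan u)%VS)%N.
Proof.
have [S0 uS0 cardS0] := notinN_coef hu.1 hnu.
have cardC : (t.-1 <= #|~: S0|)%N by rewrite cardsCs card_ord setCK; lia.
apply: leq_trans (dimvS (span_monomial_multiples_sub u (enum (powerset (~: S0))))).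
rewrite (eqP (free_monomial_multiples uS0)) size_map -cardE card_powerset.
by rewrite leq_exp2l.
Qed.
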